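(* Let $\mathcal C$ be a clustering problem satisfying Assumption 1, $P\in\Lambda$ with $p_{\min}=\min_{i\in[K]}\min_{a\in\mathcal X}P_i(a)>0$, $\gamma\in(0,1/K)$, and $\sigma'\in\mathcal C\setminus\{\sigma_P\}$. Then for all $x,y\in\Sigma_K^\gamma$, $$\|\nabla_wg_P^{\sigma'}(x)-\nabla_wg_P^{\sigma'}(y)\|_\infty\le\frac{D}{\gamma}\|x-y\|_\infty,\qquad D=\Big(\max_{\sigma''\in\mathcal C}\max_{m\in[M_{\sigma''}]}|\mathcal A_m^{\sigma''}|\Big)\frac{|\mathcal X|(1-p_{\min})}{4p_{\min}}.$$
   Context: Framework. Let $\mathcal X$ be a finite alphabet with $|\mathcal X|\ge2$, $\mathcal P(\mathcal X)$ the set of probability distributions on $\mathcal X$, and $K\ge2$ an integer (number of arms); $[n]=\{1,\dots,n\}$. A hypothesis is a collection $\sigma=\{\mathcal A_1^\sigma,\dots,\mathcal A_{M_\sigma}^\sigma\}$ ($M_\sigma\ge1$) of pairwise disjoint subsets of $[K]$, each of cardinality at least 2 (clusters); let $\mathcal A^\sigma_{M_\sigma+1}=[K]\setminus\bigcup_{m\le M_\sigma}\mathcal A_m^\sigma$. $\Lambda_\sigma$ is the set of $P\in\mathcal P(\mathcal X)^K$ with $P_i=P_j$ whenever $i,j\in\mathcal A_m^\sigma$ for some $m\le M_\sigma$, and $P_i\neq P_j$ whenever $i\in\mathcal A_{m_1}^\sigma$, $j\in\mathcal A_{m_2}^\sigma$ with $m_1\ne m_2\in[M_\sigma+1]$.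 A clustering problem is a finite set $\mathcal C$ of hypotheses with $|\mathcal C|\ge2$; $\Lambda=\bigcup_{\sigma\in\mathcal C}\Lambda_\sigma$. Hypothesis $\sigma$ dominates $\sigma'$ if every cluster of $\sigma$ is a subset of some cluster of $\sigma'$. Assumption 1: (i) there is no pair $\sigma\neq\sigma'$ in $\mathcal C$ such that $\sigma$ dominates $\sigma'$; (ii) every $P\in\Lambda$ belongs to $\Lambda_\sigma$ for exactly one $\sigma\in\mathcal C$, denoted $\sigma_P$. Functions. $D(P\|Q)$ is the KL divergence. $\Sigma_K=\{w\in\mathbb R^K: w_i\ge0,\sum_iw_i=1\}$ and $\Sigma_K^\gamma=\{w\in\Sigma_K:w_i\ge\gamma\ \forall i\}$. For $\mathcal A\subseteq[K]$, $G(P_{\mathcal A},w_{\mathcal A})=0$ if $w_i=0$ for all $i\in\mathcal A$, and otherwise $G(P_{\mathcal A},w_{\mathcal A})=\sum_{i\in\mathcal A}w_iD(P_i\|W)$ with $W=\sum_{i\in\mathcal A}w_iP_i/\sum_{i\in\mathcal A}w_i$. For $\sigma\in\mathcal C$, $g_P^\sigma(w)=\sum_{m=1}^{M_\sigma}G(P_{\mathcal A_m^\sigma},w_{\mathcal A_m^\sigma})$. The gradient $\nabla_w g_P^{\sigma'}(w)$ is the vector of partial derivatives in $w$ of the formula defining $g_P^{\sigma'}$ (on the positive orthant); explicitly its $i$-th coordinate is $D(P_i\|W_m)$ if $i\in\mathcal A_m^{\sigma'}$, with $W_m=\sum_{j\in\mathcal A_m^{\sigma'}}w_jP_j/\sum_{j\in\mathcal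 A_m^{\sigma'}}w_j$, and $0$ if $i$ is in no cluster of $\sigma'$. *)

From mathcomp Require Import all_boot all_order all_algebra.
From mathcomp Require Import all_classical all_reals all_analysis.
Set Implicit Arguments. Unset Strict Implicit. Unset Printing Implicit Defensive.
Import Order.TTheory GRing.Theory Num.Theory.
Local Open Scope ring_scope.

Section Defs.
Variables (R : realType) (X : finType) (K : nat).

Definition hyp := {set {set 'I_K}}.

Definition is_hyp (s : hyp) : Prop :=
  [/\ s != finset.set0, finset.trivIset s & forall A, A \in s -> (2 <= #|A|)%N].

Definition is_dist (p : {ffun X -> R}) : Prop :=
  (forall a, 0 <= p a) /\ \sum_a p a = 1.

(* i and j lie in different blocks among A_1..A_M, A_{M+1} = [K] \ cover *)
Definition diff_blocks (s : hyp) (i j : 'I_K) : Prop :=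
  exists2 A, A \in s & (i \in A) != (j \in A).

Definition in_Lambda (s : hyp) (P : 'I_K -> {ffun X -> R}) : Prop :=
  [/\ forall i, is_dist (P i),
      (forall A, A \in s -> forall i j, i \in A -> j \in A -> P i = P j) &
      (forall i j, diff_blocks s i j -> P i <> P j)].

Definition in_LambdaC (C : {set hyp}) P : Prop :=
  exists2 s, s \in C & in_Lambda s P.

Definition dominates (s s' : hyp) : Prop :=
  forall A, A \in s -> exists2 B, B \in s' & A \subset B.

Definition clustering_problem (C : {set hyp}) : Prop :=
  (2 <= #|C|)%N /\ forall s, s \in C -> is_hyp s.

Definition Assumption1 (C : {set hyp}) : Prop :=
  (forall s s', s \in C -> s' \in C -> s != s' -> ~ dominates s s') /\
  (forall P, in_LambdaC C P ->
     exists! s, s \in C /\ in_Lambda s P).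

(* KL divergence, with the convention 0 * ln(0/q) = 0 *)
Definition KL (p q : X -> R) : R :=
  \sum_a (if p a == 0 then 0 else p a * ln (p a / q a)).

Definition mixture (A : {set 'I_K}) (P : 'I_K -> {ffun X -> R})
  (w : 'I_K -> R) (a : X) : R :=
  (\sum_(j in A) w j * P j a) / (\sum_(j in A) w j).

(* gradient of g_P^sigma at w (explicit formula from the paper) *)
Definition grad_g (s : hyp) (P : 'I_K -> {ffun X -> R}) (w : 'I_K -> R)
  (i : 'I_K) : R :=
  match [pick A in s | i \in A] with
  | Some A => KL (P i) (mixture A P w)
  | None => 0
  end.

Definition simplex_ge (gamma : R) (w : 'I_K -> R) : Prop :=
  (forall i, gamma <= w i) /\ \sum_i w i = 1.

Definition supnorm (v : 'I_K -> R) : R := \big[Num.max/0]_i `|v i|.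

(* p_min = min_i min_a P_i(a); 1 is a neutral element since P_i(a) <= 1 *)
Definition pmin (P : 'I_K -> {ffun X -> R}) : R :=
  \big[Num.min/1]_i \big[Num.min/1]_a P i a.

Definition Dconst (C : {set hyp}) (P : 'I_K -> {ffun X -> R}) : R :=
  (\max_(s in C) \max_(A in s) #|A|)%:R * #|X|%:R * (1 - pmin P)
    / (4 * pmin P).

End Defs.

From mathcomp Require Import all_boot all_order all_algebra.
From mathcomp Require Import all_classical all_reals all_analysis.
From mathcomp Require Import ring lra.
Import Order.TTheory GRing.Theory Num.Theory.
Set Implicit Arguments. Unset Strict Implicit.
Local Open Scope ring_scope.

(* Each coordinate of the gradient is a divergence KL(P_i || W) to a mixture W
   of the rows P_j of one cluster.  All rows, hence all mixtures, take values in
   [p_min, 1 - p_min].  On that interval ln is (1/p_min)-Lipschitz, so KL(P_i || .)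
   is (1/p_min)-Lipschitz in sup norm; and moving the weights by d moves the
   mixture by at most d (1 - 2 p_min) / gamma when all weights are at least gamma.
   This gives the Lipschitz constant (1 - 2 p_min) / (gamma p_min), which is at
   most D / gamma.  The bound holds for every hypothesis sigma'. *)

Lemma ln_sub_le_div (R : realType) (u v : R) :
  0 < v -> v <= u -> ln u - ln v <= (u - v) / v.
Proof.
move=> v_gt0 vu; have u_gt0 := lt_le_trans v_gt0 vu.
rewrite -ln_div ?posrE //.
have -> : u / v = 1 + (u - v) / v by field; rewrite gt_eqF.
apply: le_ln1Dx; apply: (@lt_le_trans _ _ 0); first by rewrite ltrN10.
by rewrite divr_ge0 // ?subr_ge0 // ltW.
Qed.

Lemma ln_lipschitz (R : realType) (m u v : R) : 0 < m -> m <= u -> m <= v ->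
  `|ln u - ln v| <= `|u - v| / m.
Proof.
move=> m_gt0; wlog vu : u v / v <= u => [sym mu mv | mu mv].
  case: (leP v u) => [vu | /ltW uv]; first exact: sym.
  by rewrite distrC (distrC u); exact: sym.
have v_gt0 := lt_le_trans m_gt0 mv; have u_gt0 := lt_le_trans v_gt0 vu.
rewrite !ger0_norm ?subr_ge0 ?ler_ln ?posrE //.
apply: le_trans (ln_sub_le_div v_gt0 vu) _.
by rewrite ler_wpM2l ?subr_ge0 // lef_pV2 ?posrE.
Qed.

Lemma KL_lipschitz (R : realType) (X : finType) (p : {ffun X -> R})
    (u v : X -> R) (m e : R) :
  is_dist p -> 0 < m -> (forall a, m <= u a) -> (forall a, m <= v a) ->
  (forall a, `|u a - v a| <= e) -> `|KL p u - KL p v| <= e / m.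
Proof.
move=> [p_ge0 p_sum1] m_gt0 mu mv uv_le.
rewrite /KL -sumrB; apply: le_trans (ler_norm_sum _ _ _) _.
rewrite -[e / m]mul1r -p_sum1 mulr_suml; apply: ler_sum => a _.
case: eqP => [-> | /eqP pa_neq0]; first by rewrite subrr normr0 mul0r.
have pa_gt0 : 0 < p a by rewrite lt0r pa_neq0 p_ge0.
have ua_gt0 := lt_le_trans m_gt0 (mu a); have va_gt0 := lt_le_trans m_gt0 (mv a).
rewrite !ln_div ?posrE //.
have -> : p a * (ln (p a) - ln (u a)) - p a * (ln (p a) - ln (v a))
          = p a * (ln (v a) - ln (u a)) by ring.
rewrite normrM (ger0_norm (ltW pa_gt0)) ler_pM2l //.
apply: le_trans (ln_lipschitz m_gt0 (mv a) (mu a)) _.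
by rewrite ler_pM2r ?invr_gt0 // distrC.
Qed.

Section Mixture.
Variables (R : realType) (X : finType) (K : nat).
Variables (A : {set 'I_K}) (P : 'I_K -> {ffun X -> R}).

Lemma weight_sum_gt0 (w : 'I_K -> R) (i : 'I_K) :
  i \in A -> (forall j, j \in A -> 0 < w j) -> 0 < \sum_(j in A) w j.
Proof.
move=> iA w_gt0; rewrite (bigD1 i) //=; apply: (lt_le_trans (w_gt0 i iA)).
by rewrite lerDl; apply: sumr_ge0 => j /andP[jA _]; exact/ltW/w_gt0.
Qed.

Lemma mixture_between (w : 'I_K -> R) (i : 'I_K) (a : X) (lo hi : R) :
  i \in A -> (forall j, j \in A -> 0 < w j) ->
  (forall j, j \in A -> lo <= P j a <= hi) ->
  lo <= mixture A P w a <= hi.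
Proof.
move=> iA w_gt0 P_between; have S_gt0 := weight_sum_gt0 iA w_gt0.
rewrite /mixture ler_pdivlMr // ler_pdivrMr // !mulr_sumr.
apply/andP; split; apply: ler_sum => j jA;
  have [lo_le le_hi] := andP (P_between j jA); have w_ge0 := ltW (w_gt0 j jA).
  by rewrite mulrC; exact: ler_wpM2l.
by rewrite [hi * _]mulrC; exact: ler_wpM2l.
Qed.

(* The [y]-weighted deviations [P j a - mixture A P y a] sum to zero. *)
Lemma mixture_subE (x y : 'I_K -> R) (a : X) :
  \sum_(j in A) x j != 0 -> \sum_(j in A) y j != 0 ->
  mixture A P x a - mixture A P y a =
  (\sum_(j in A) (x j - y j) * (P j a - mixture A P y a)) / \sum_(j in A) x j.
Proof.
move=> Sx_neq0 Sy_neq0; set Wy := mixture A P y a.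
have dev_y : \sum_(j in A) y j * (P j a - Wy) = 0.
  rewrite (eq_bigr (fun j => y j * P j a - Wy * y j)); last by move=> j _; ring.
  by rewrite sumrB -mulr_sumr /Wy /mixture mulrAC -mulrA divff // mulr1 subrr.
rewrite (eq_bigr (fun j => (x j * P j a - Wy * x j) - y j * (P j a - Wy)));
  last by move=> j _; ring.
by rewrite sumrB dev_y subr0 sumrB -mulr_sumr /mixture; field.
Qed.

Lemma mixture_lipschitz (x y : 'I_K -> R) (i : 'I_K) (a : X) (g d c : R) :
  i \in A -> 0 < g -> (forall j, j \in A -> g <= x j) ->
  (forall j, j \in A -> g <= y j) -> (forall j, j \in A -> `|x j - y j| <= d) ->
  (forall j, j \in A -> `|P j a - mixture A P y a| <= c) ->
  `|mixture A P x a - mixture A P y a| <= d * c / g.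
Proof.
move=> iA g_gt0 gx gy dxy dev.
have x_gt0 j : j \in A -> 0 < x j by move=> jA; exact: lt_le_trans g_gt0 (gx _ jA).
have y_gt0 j : j \in A -> 0 < y j by move=> jA; exact: lt_le_trans g_gt0 (gy _ jA).
have Sx_gt0 := weight_sum_gt0 iA x_gt0; have Sy_gt0 := weight_sum_gt0 iA y_gt0.
rewrite mixture_subE ?gt_eqF // normrM normfV (ger0_norm (ltW Sx_gt0)).
rewrite ler_pdivrMr // mulr_sumr; apply: le_trans (ler_norm_sum _ _ _) _.
apply: ler_sum => j jA.
have d_ge0 : 0 <= d := le_trans (normr_ge0 _) (dxy _ jA).
have c_ge0 : 0 <= c := le_trans (normr_ge0 _) (dev _ jA).
rewrite normrM; apply: le_trans (ler_pM _ _ (dxy _ jA) (dev _ jA)) _ => //.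
rewrite -[d * c / g * _]mulrA; apply: ler_peMr; first exact: mulr_ge0.
by rewrite ler_pdivlMl // mulr1 gx.
Qed.

End Mixture.

Lemma supnorm_ge0 (R : realType) (K : nat) (v : 'I_K -> R) : 0 <= supnorm v.
Proof. exact: bigmax_ge_id. Qed.

Lemma normr_le_supnorm (R : realType) (K : nat) (v : 'I_K -> R) (i : 'I_K) :
  `|v i| <= supnorm v.
Proof. exact: le_bigmax. Qed.

Lemma supnorm_le (R : realType) (K : nat) (v : 'I_K -> R) (b : R) :
  0 <= b -> (forall i, `|v i| <= b) -> supnorm v <= b.
Proof. by move=> b_ge0 vb; apply: bigmax_le. Qed.

Section MinimalProbability.
Variables (R : realType) (X : finType) (K : nat) (P : 'I_K -> {ffun X -> R}).
Hypotheses (X_ge2 : (2 <= #|X|)%N) (P_dist : forall i, is_dist (P i)).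

Lemma pmin_le (i : 'I_K) (a : X) : pmin P <= P i a.
Proof. exact: le_trans (bigmin_le _ i _) (bigmin_le _ a _). Qed.

(* Some other letter [b] carries mass at least [pmin P]. *)
Lemma le_1_sub_pmin (i : 'I_K) (a : X) : P i a <= 1 - pmin P.
Proof.
have [P_ge0 P_sum1] := P_dist i.
have : (0 < #|predC1 a|)%N by rewrite cardC1; case: #|X| X_ge2 => // -[].
case/card_gt0P => b; rewrite !inE => ba.
have : P i a + P i b <= 1.
  rewrite -P_sum1 (bigD1 a) //= (bigD1 b) /=; last by rewrite ba.
  by rewrite addrA lerDl; apply: sumr_ge0.
have := pmin_le i b; lra.
Qed.

Lemma pmin_le_half : 'I_K -> pmin P <= 1 / 2.
Proof.
move=> i; have /card_gt0P[a _] : (0 < #|X|)%N by case: #|X| X_ge2.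
have := pmin_le i a; have := le_1_sub_pmin i a; lra.
Qed.

Lemma lipschitz_factor_ge0 (i : 'I_K) (d gamma : R) :
  0 <= d -> 0 < gamma -> 0 < pmin P -> 0 <= d * (1 - 2 * pmin P) / gamma / pmin P.
Proof.
move=> d_ge0 gamma_gt0 pmin_gt0; have := pmin_le_half i => pmin_half.
do 2 (apply: divr_ge0; last exact: ltW).
by apply: mulr_ge0 => //; lra.
Qed.

Lemma grad_g_lipschitz (s : hyp K) (gamma : R) (x y : 'I_K -> R) (i : 'I_K) :
  0 < pmin P -> 0 < gamma -> (forall j, gamma <= x j) -> (forall j, gamma <= y j) ->
  `|grad_g s P x i - grad_g s P y i|
    <= supnorm (fun j => x j - y j) * (1 - 2 * pmin P) / gamma / pmin P.
Proof.
move=> pmin_gt0 gamma_gt0 gx gy; rewrite /grad_g.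
case: pickP => [A /andP[_ iA] | _]; last first.
  by rewrite subrr normr0 (lipschitz_factor_ge0 i) ?supnorm_ge0.
have W_between w : (forall j, gamma <= w j) ->
    forall a, pmin P <= mixture A P w a <= 1 - pmin P.
  move=> gw a; apply: (mixture_between iA) => j _.
    exact: lt_le_trans gamma_gt0 (gw j).
  by rewrite pmin_le le_1_sub_pmin.
apply: KL_lipschitz (P_dist i) pmin_gt0 _ _ _ => a.
- by case/andP: (W_between x gx a).
- by case/andP: (W_between y gy a).
apply: (mixture_lipschitz iA gamma_gt0) => j _ //; first exact: normr_le_supnorm.
have := W_between y gy a; have := pmin_le j a; have := le_1_sub_pmin j a.
rewrite ler_norml => ? ? /andP[? ?]; apply/andP; split; lra.
Qed.

End MinimalProbability.

Lemma max_cluster_size_ge2 (K : nat) (C : {set hyp K}) (s : hyp K) :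
  clustering_problem C -> s \in C -> (2 <= \max_(s in C) \max_(A in s) #|A|)%N.
Proof.
move=> [_ C_hyp] sC; have [s_neq0 _ card_ge2] := C_hyp s sC.
case/set0Pn: s_neq0 => A As; apply: leq_trans (card_ge2 _ As) _.
apply: leq_trans (@leq_bigmax_cond _ (mem s) (fun A => #|A|) A As) _.
exact: (@leq_bigmax_cond _ (mem C) (fun s : hyp K => \max_(A in s) #|A|) s sC).
Qed.

Lemma Dconst_ge (R : realType) (X : finType) (K : nat) (C : {set hyp K})
    (P : 'I_K -> {ffun X -> R}) (s : hyp K) :
  (2 <= #|X|)%N -> clustering_problem C -> s \in C -> 0 < pmin P -> pmin P <= 1 ->
  (1 - 2 * pmin P) / pmin P <= Dconst C P.
Proof.
move=> X_ge2 hC sC pmin_gt0 pmin_le1; rewrite /Dconst.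
have := max_cluster_size_ge2 hC sC; set n := (\max_(s in C) _)%N => n_ge2.
have nR : (2 : R) <= n%:R by rewrite (ler_nat R 2).
have XR : (2 : R) <= #|X|%:R by rewrite (ler_nat R 2).
have -> : n%:R * #|X|%:R * (1 - pmin P) / (4 * pmin P)
          = n%:R * #|X|%:R / 4 * ((1 - pmin P) / pmin P).
  by field; rewrite gt_eqF.
have ratio_ge0 : 0 <= (1 - pmin P) / pmin P.
  by apply: divr_ge0; [lra | exact: ltW].
apply: (@le_trans _ _ ((1 - pmin P) / pmin P)).
  by apply: ler_wpM2r; [rewrite invr_ge0 ltW | lra].
by apply: ler_peMl => //; rewrite ler_pdivlMr //; nra.
Qed.

Theorem lemma5 (R : realType) (X : finType) (K : nat)
  (hX : (2 <= #|X|)%N) (hK : (2 <= K)%N)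
  (C : {set hyp K}) (hC : clustering_problem C) (hA1 : Assumption1 R X C)
  (P : 'I_K -> {ffun X -> R}) (sigP : hyp K)
  (hsigP : sigP \in C) (hPsig : in_Lambda sigP P)
  (hpmin : 0 < pmin P)
  (gamma : R) (hg0 : 0 < gamma) (hg1 : gamma < K%:R^-1)
  (sig' : hyp K) (hsig' : sig' \in C) (hne : sig' != sigP) :
  forall x y : 'I_K -> R, simplex_ge gamma x -> simplex_ge gamma y ->
    supnorm (fun i => grad_g sig' P x i - grad_g sig' P y i)
      <= Dconst C P / gamma * supnorm (fun i => x i - y i).
Proof.
move=> x y [gx _] [gy _].
have P_dist : forall i, is_dist (P i) by case: hPsig.
have i0 : 'I_K := Ordinal (ltnW hK).
set dl := supnorm (fun i => x i - y i).
have dl_ge0 : 0 <= dl := supnorm_ge0 _.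
have bound_ge0 := lipschitz_factor_ge0 hX P_dist i0 dl_ge0 hg0 hpmin.
apply: (le_trans (supnorm_le bound_ge0 _)) => [i|].
  exact: grad_g_lipschitz hpmin hg0 gx gy.
have -> : dl * (1 - 2 * pmin P) / gamma / pmin P
          = dl / gamma * ((1 - 2 * pmin P) / pmin P) by ring.
rewrite (_ : Dconst C P / gamma * dl = dl / gamma * Dconst C P); last by ring.
apply: ler_wpM2l; first by apply: divr_ge0 => //; exact: ltW.
apply: (Dconst_ge hX hC hsig' hpmin).
have := pmin_le_half hX P_dist i0; lra.
Qed.
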